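(* Let $A\bowtie^{\theta} I$ be an amalgamated Banach algebra as in the context, and assume that $A\bowtie^\theta I$ is commutative, $\sigma(A)\neq\emptyset$, and $\theta(A)I=\{\theta(a)i: a\in A, i\in I\}$ has dense linear span in $I$. Then $$\mathrm{rad}(A\bowtie^{\theta} I)=\{(a,i): a\in\mathrm{rad}\,A,\ i\in\mathrm{rad}\,I\}.$$
   Context: Let $A$ and $B$ be Banach algebras, $\theta:A\to B$ a continuous algebra homomorphism with $\|\theta\|\le 1$, and $I$ a closed two-sided ideal of $B$. The amalgamated Banach algebra $A\bowtie^{\theta} I$ is the Banach space $\{(a,i): a\in A,\ i\in I\}$ with norm $\|(a,i)\|=\|a\|+\|i\|$ and product $(a,i)\cdot(a',i')=(aa',\ \theta(a)i'+i\theta(a')+ii')$. For a commutative Banach algebra $C$, $\sigma(C)$ is the set of nonzero multiplicative linear functionals on $C$, and $\mathrm{rad}\,C=\bigcap_{\chi\in\sigma(C)}\ker\chi$ (equal to $C$ if $\sigma(C)=\emptyset$). *)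

From Stdlib Require Import Reals List.
Open Scope R_scope.

Record C := Cmk { Cre : R; Cim : R }.
Definition C0 : C := Cmk 0 0.
Definition C1 : C := Cmk 1 0.
Definition Cadd (z w : C) : C := Cmk (Cre z + Cre w) (Cim z + Cim w).
Definition Cmul (z w : C) : C :=
  Cmk (Cre z * Cre w - Cim z * Cim w) (Cre z * Cim w + Cim z * Cre w).
Definition Cnorm (z : C) : R := sqrt (Cre z * Cre z + Cim z * Cim z).

Record BanachAlgebra := {
  car :> Type;
  zero : car;
  add : car -> car -> car;
  opp : car -> car;
  scal : C -> car -> car;
  mul : car -> car -> car;
  norm : car -> R;
  addA : forall x y z, add x (add y z) = add (add x y) z;
  addC : forall x y, add x y = add y x;
  add0 : forall x, add zero x = x;
  addN : forall x, add x (opp x) = zero;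
  scalDr : forall c x y, scal c (add x y) = add (scal c x) (scal c y);
  scalDl : forall c d x, scal (Cadd c d) x = add (scal c x) (scal d x);
  scalA : forall c d x, scal (Cmul c d) x = scal c (scal d x);
  scal1 : forall x, scal C1 x = x;
  mulA : forall x y z, mul x (mul y z) = mul (mul x y) z;
  mulDl : forall x y z, mul (add x y) z = add (mul x z) (mul y z);
  mulDr : forall x y z, mul x (add y z) = add (mul x y) (mul x z);
  scal_mull : forall c x y, scal c (mul x y) = mul (scal c x) y;
  scal_mulr : forall c x y, scal c (mul x y) = mul x (scal c y);
  norm_eq0 : forall x, norm x = 0 -> x = zero;
  normD : forall x y, norm (add x y) <= norm x + norm y;
  normZ : forall c x, norm (scal c x) = Cnorm c * norm x;
  normM : forall x y, norm (mul x y) <= norm x * norm y;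
  complete : forall u : nat -> car,
    (forall eps, 0 < eps -> exists N, forall m n, (N <= m)%nat -> (N <= n)%nat ->
        norm (add (u m) (opp (u n))) < eps) ->
    exists l, forall eps, 0 < eps -> exists N, forall n, (N <= n)%nat ->
        norm (add (u n) (opp l)) < eps
}.

Arguments zero {b}. Arguments add {b}. Arguments opp {b}. Arguments scal {b}.
Arguments mul {b}. Arguments norm {b}.

Definition sub {A : BanachAlgebra} (x y : A) : A := add x (opp y).

Definition contraction_hom (A B : BanachAlgebra) (th : A -> B) : Prop :=
  (forall x y, th (add x y) = add (th x) (th y)) /\
  (forall c x, th (scal c x) = scal c (th x)) /\
  (forall x y, th (mul x y) = mul (th x) (th y)) /\
  (forall x, norm (th x) <= norm x).

Definition closed_ideal (B : BanachAlgebra) (I : B -> Prop) : Prop :=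
  I zero /\
  (forall x y, I x -> I y -> I (add x y)) /\
  (forall c x, I x -> I (scal c x)) /\
  (forall b x, I x -> I (mul b x)) /\
  (forall b x, I x -> I (mul x b)) /\
  (forall (u : nat -> B) l, (forall n, I (u n)) ->
     (forall eps, 0 < eps -> exists N, forall n, (N <= n)%nat -> norm (sub (u n) l) < eps) ->
     I l).

(* ---------- characters and radical of an algebra living on a subset P
   of a carrier T, with given operations (the subset is closed under them) ---------- *)
Definition is_character {T : Type} (P : T -> Prop) (addT : T -> T -> T)
  (scalT : C -> T -> T) (mulT : T -> T -> T) (chi : T -> C) : Prop :=
  (forall x y, P x -> P y -> chi (addT x y) = Cadd (chi x) (chi y)) /\
  (forall c x, P x -> chi (scalT c x) = Cmul c (chi x)) /\
  (forall x y, P x -> P y -> chi (mulT x y) = Cmul (chi x) (chi y)) /\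
  (exists x, P x /\ chi x <> C0).

(* x \in rad = intersection of kernels of all characters (everything if none) *)
Definition in_rad {T : Type} (P : T -> Prop) (addT : T -> T -> T)
  (scalT : C -> T -> T) (mulT : T -> T -> T) (x : T) : Prop :=
  P x /\ forall chi, is_character P addT scalT mulT chi -> chi x = C0.

Definition sigma_nonempty (A : BanachAlgebra) : Prop :=
  exists chi : A -> C, is_character (fun _ => True) add scal mul chi.
Definition radA (A : BanachAlgebra) (a : A) : Prop :=
  in_rad (fun _ => True) add scal mul a.

Definition radI (B : BanachAlgebra) (I : B -> Prop) (i : B) : Prop :=
  in_rad I add scal mul i.

(* ---------- the amalgamated algebra A ⋈^θ I, as the subset A × I of A × B ---------- *)
Definition amal_add {A B : BanachAlgebra} (p q : A * B) : A * B :=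
  (add (fst p) (fst q), add (snd p) (snd q)).
Definition amal_scal {A B : BanachAlgebra} (c : C) (p : A * B) : A * B :=
  (scal c (fst p), scal c (snd p)).
Definition amal_mul {A B : BanachAlgebra} (th : A -> B) (p q : A * B) : A * B :=
  (mul (fst p) (fst q),
   add (add (mul (th (fst p)) (snd q)) (mul (snd p) (th (fst q)))) (mul (snd p) (snd q))).
Definition amal_norm {A B : BanachAlgebra} (p : A * B) : R := norm (fst p) + norm (snd p).

Definition amal_commutative {A B : BanachAlgebra} (th : A -> B) (I : B -> Prop) : Prop :=
  forall p q : A * B, I (snd p) -> I (snd q) -> amal_mul th p q = amal_mul th q p.

Definition rad_amal {A B : BanachAlgebra} (th : A -> B) (I : B -> Prop) (p : A * B) : Prop :=
  in_rad (fun p : A * B => I (snd p)) amal_add amal_scal (amal_mul th) p.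

Fixpoint lin_comb {A B : BanachAlgebra} (th : A -> B) (l : list (C * A * B)) : B :=
  match l with
  | nil => zero
  | (c, a, i) :: l' => add (scal c (mul (th a) i)) (lin_comb th l')
  end.
Definition in_span_thetaAI {A B : BanachAlgebra} (th : A -> B) (I : B -> Prop) (x : B) : Prop :=
  exists l : list (C * A * B), (forall t, In t l -> I (snd t)) /\ x = lin_comb th l.

Definition span_dense_in_I {A B : BanachAlgebra} (th : A -> B) (I : B -> Prop) : Prop :=
  forall i, I i -> forall eps, 0 < eps ->
    exists x, in_span_thetaAI th I x /\ norm (sub i x) < eps.

(* A character of a commutative amalgamation either vanishes on [0 ⋈ I] and then
   comes from a character of [A] through the first projection, or it restricts to a
   character [psi] of [I]; in the latter case, fixing [j] with [psi j <> 0], the map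
   [x |-> psi (θ x j) / psi j] is multiplicative on [A] and the character is
   [(x, k) |-> psi (θ x j) / psi j + psi k].  Conversely every such formula defines a
   character.  Hence [(a, i)] is killed by all characters of the amalgamation iff
   [a] is killed by all characters of [A] and [i] by all characters of [I]. *)
From Pilot Require Import Defs.
From Stdlib Require Import Reals Psatz Classical.
Open Scope R_scope.
Import Defs.

Lemma C_ext (z w : C) : Cre z = Cre w -> Cim z = Cim w -> z = w.
Proof. destruct z, w; simpl; intros -> ->; reflexivity. Qed.

Ltac Cring := apply C_ext; simpl; ring.

Lemma Cmul_left_inv (z : C) : z <> C0 -> exists w, Cmul w z = C1.
Proof.
  destruct z as [r s]; intro Hz.
  assert (Hd : r * r + s * s <> 0).
  { intro H. apply Hz. assert (r = 0) by nra. assert (s = 0) by nra. now subst. }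
  exists (Cmk (r / (r * r + s * s)) (- s / (r * r + s * s))).
  unfold Cmul, C1; simpl; f_equal; field; auto.
Qed.

Lemma Cadd_idem (z : C) : Cadd z z = z -> z = C0.
Proof. destruct z; unfold Cadd, C0; simpl; intro H; injection H; intros; f_equal; lra. Qed.

Section AlgebraLemmas.
Variable X : BanachAlgebra.

Lemma add_idem (y : X) : add y y = y -> y = zero.
Proof.
  intro H. transitivity (add (add y y) (opp y)).
  - now rewrite <- addA, addN, addC, add0.
  - now rewrite H, addN.
Qed.

Lemma addr0 (x : X) : add x zero = x.
Proof. rewrite addC; apply add0. Qed.

Lemma mul0l (x : X) : mul zero x = zero.
Proof. apply add_idem. now rewrite <- mulDl, add0. Qed.

Lemma mul0r (x : X) : mul x zero = zero.
Proof. apply add_idem. now rewrite <- mulDr, add0. Qed.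

Lemma scal0 (c : C) : scal c (@zero X) = zero.
Proof. apply add_idem. now rewrite <- scalDr, add0. Qed.

End AlgebraLemmas.

Definition mult_linear {T : Type} (P : T -> Prop) (addT : T -> T -> T)
  (scalT : C -> T -> T) (mulT : T -> T -> T) (chi : T -> C) : Prop :=
  (forall x y, P x -> P y -> chi (addT x y) = Cadd (chi x) (chi y)) /\
  (forall c x, P x -> chi (scalT c x) = Cmul c (chi x)) /\
  (forall x y, P x -> P y -> chi (mulT x y) = Cmul (chi x) (chi y)).

Lemma is_characterE {T : Type} (P : T -> Prop) addT scalT mulT (chi : T -> C) :
  is_character P addT scalT mulT chi <->
  mult_linear P addT scalT mulT chi /\ exists x, P x /\ chi x <> C0.
Proof. unfold is_character, mult_linear; tauto. Qed.

(* The zero functional is the only multiplicative linear functional that is not a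
   character, so the radical lies in the kernel of all of them. *)
Lemma in_rad_mult_linear {T : Type} (P : T -> Prop) addT scalT mulT (chi : T -> C) x :
  mult_linear P addT scalT mulT chi -> in_rad P addT scalT mulT x -> chi x = C0.
Proof.
  intros Hchi [Px Hx].
  destruct (classic (exists y, P y /\ chi y <> C0)) as [Hnz | Hz].
  - apply Hx, is_characterE; auto.
  - apply NNPP; intro Hxz. apply Hz; eauto.
Qed.

Section Amalgamation.
Variables (A B : BanachAlgebra) (th : A -> B) (I : B -> Prop).
Hypothesis th_add : forall x y, th (add x y) = add (th x) (th y).
Hypothesis th_scal : forall c x, th (scal c x) = scal c (th x).
Hypothesis th_mul : forall x y, th (mul x y) = mul (th x) (th y).
Hypothesis I_zero : I zero.
Hypothesis I_add : forall x y, I x -> I y -> I (add x y).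
Hypothesis I_scal : forall c x, I x -> I (scal c x).
Hypothesis I_mull : forall b x, I x -> I (mul b x).
Hypothesis I_mulr : forall b x, I x -> I (mul x b).
Hypothesis amal_comm : amal_commutative th I.

#[local] Hint Resolve I_zero I_add I_scal I_mull I_mulr : core.

Notation amal_P := (fun p : A * B => I (snd p)).
Notation mult_linear_amal := (mult_linear amal_P amal_add amal_scal (amal_mul th)).

Lemma th0 : th zero = zero.
Proof. apply add_idem. now rewrite <- th_add, add0. Qed.

Lemma ideal_mulC k l : I k -> I l -> mul k l = mul l k.
Proof.
  intros Hk Hl. pose proof (f_equal snd (amal_comm (zero, k) (zero, l) Hk Hl)) as E.
  simpl in E. now rewrite th0, !mul0l, !mul0r, !add0 in E.
Qed.

Lemma th_mulC x k : I k -> mul (th x) k = mul k (th x).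
Proof.
  intros Hk. pose proof (f_equal snd (amal_comm (x, zero) (zero, k) I_zero Hk)) as E.
  simpl in E. now rewrite th0, !mul0l, !mul0r, !addr0, !add0 in E.
Qed.

Lemma mult_linear_amal_restrA chi :
  mult_linear_amal chi -> mult_linear (fun _ => True) add scal mul (fun x => chi (x, zero)).
Proof.
  intros [cA [cS cM]]; repeat split.
  - intros x y _ _. rewrite <- cA; simpl; auto. unfold amal_add; simpl; now rewrite add0.
  - intros c x _. rewrite <- cS; simpl; auto. unfold amal_scal; simpl; now rewrite scal0.
  - intros x y _ _. rewrite <- cM; simpl; auto.
    unfold amal_mul; simpl; now rewrite !mul0l, !mul0r, !add0.
Qed.

Lemma mult_linear_amal_restrI chi :
  mult_linear_amal chi -> mult_linear I add scal mul (fun k => chi (zero, k)).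
Proof.
  intros [cA [cS cM]]; repeat split.
  - intros x y Hx Hy. rewrite <- cA; simpl; auto. unfold amal_add; simpl; now rewrite add0.
  - intros c x Hx. rewrite <- cS; simpl; auto. unfold amal_scal; simpl; now rewrite scal0.
  - intros x y Hx Hy. rewrite <- cM; simpl; auto.
    unfold amal_mul; simpl; now rewrite th0, !mul0l, !mul0r, !add0.
Qed.

Lemma rad_pair_in_rad_amal a i :
  I i -> radA A a -> radI B I i -> rad_amal th I (a, i).
Proof.
  intros Hi Ha_rad Hi_rad. split; [exact Hi|]. intros chi Hchi.
  apply is_characterE in Hchi as [Hlin _].
  assert (Hsplit : (a, i) = amal_add (a, zero) (zero, i)).
  { unfold amal_add; simpl. now rewrite addr0, add0. }
  rewrite Hsplit, (proj1 Hlin) by (simpl; auto).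
  rewrite (in_rad_mult_linear _ _ _ _ _ a (mult_linear_amal_restrA chi Hlin) Ha_rad).
  rewrite (in_rad_mult_linear _ _ _ _ _ i (mult_linear_amal_restrI chi Hlin) Hi_rad).
  Cring.
Qed.

Lemma character_amal_of_A phi :
  is_character (fun _ => True) add scal mul phi ->
  is_character amal_P amal_add amal_scal (amal_mul th) (fun p => phi (fst p)).
Proof.
  intros [pA [pS [pM [x [_ px]]]]]. repeat split.
  - intros; simpl; apply pA; auto.
  - intros; simpl; apply pS; auto.
  - intros; simpl; apply pM; auto.
  - exists (x, zero); simpl; auto.
Qed.

Section CharacterExtension.
Variables (psi : B -> C) (j : B) (w : C).
Hypothesis psi_lin : mult_linear I add scal mul psi.
Hypothesis I_j : I j.
Hypothesis w_psi_j : Cmul w (psi j) = C1.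

Definition ext_coef (x : A) : C := Cmul w (psi (mul (th x) j)).

(* [psi (θ x l) psi j = psi (θ x l j) = psi (θ x j) psi l], using commutativity of [I]. *)
Lemma psi_th_mul x l : I l -> psi (mul (th x) l) = Cmul (ext_coef x) (psi l).
Proof.
  destruct psi_lin as [_ [_ sM]]. intros Hl.
  assert (E : Cmul (psi (mul (th x) l)) (psi j) = Cmul (psi (mul (th x) j)) (psi l)).
  { rewrite <- !sM by auto. now rewrite <- mulA, (ideal_mulC l j Hl I_j), !mulA. }
  transitivity (Cmul (Cmul w (psi j)) (psi (mul (th x) l))).
  { rewrite w_psi_j. Cring. }
  transitivity (Cmul w (Cmul (psi (mul (th x) l)) (psi j))); [Cring|].
  rewrite E. unfold ext_coef. Cring.
Qed.

Lemma ext_coef_mult_linear : mult_linear (fun _ => True) add scal mul ext_coef.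
Proof.
  destruct psi_lin as [sA [sS _]]. repeat split.
  - intros x y _ _. unfold ext_coef. rewrite th_add, mulDl, sA by auto. Cring.
  - intros c x _. unfold ext_coef. rewrite th_scal, <- scal_mull, sS by auto. Cring.
  - intros x y _ _. unfold ext_coef at 1.
    rewrite th_mul, <- mulA, psi_th_mul by auto. unfold ext_coef. Cring.
Qed.

Lemma psi0 : psi zero = C0.
Proof. destruct psi_lin as [sA _]. apply Cadd_idem. rewrite <- sA, add0; auto. Qed.

Lemma extension_character :
  psi j <> C0 ->
  is_character amal_P amal_add amal_scal (amal_mul th)
    (fun p => Cadd (ext_coef (fst p)) (psi (snd p))).
Proof.
  intros Hj. destruct psi_lin as [sA [sS sM]].
  destruct ext_coef_mult_linear as [eA [eS eM]].
  repeat split.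
  - intros [x k] [y l]; simpl; intros Hk Hl. rewrite eA, sA by auto. Cring.
  - intros c [x k]; simpl; intros Hk. rewrite eS, sS by auto. Cring.
  - intros [x k] [y l]; simpl; intros Hk Hl.
    rewrite !sA by auto.
    rewrite <- (th_mulC y k Hk), !psi_th_mul, sM, eM by auto. Cring.
  - exists (zero, j); simpl; split; auto.
    unfold ext_coef. rewrite th0, mul0l, psi0.
    intro E. apply Hj. rewrite <- E. Cring.
Qed.

End CharacterExtension.

Lemma rad_amal_radA a i : rad_amal th I (a, i) -> radA A a.
Proof.
  intros [_ H]. split; [exact Logic.I|]. intros phi Hphi.
  exact (H _ (character_amal_of_A phi Hphi)).
Qed.

Lemma rad_amal_radI a i : rad_amal th I (a, i) -> radI B I i.
Proof.
  intros H. assert (Ha := rad_amal_radA a i H).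
  destruct H as [Hi H]. split; [exact Hi|]. intros psi Hpsi.
  apply is_characterE in Hpsi as [Hlin [j [Hj pj]]].
  destruct (Cmul_left_inv _ pj) as [w Hw].
  assert (Hchar := H _ (extension_character psi j w Hlin Hj Hw pj)). simpl in Hchar.
  rewrite (in_rad_mult_linear _ _ _ _ _ a (ext_coef_mult_linear psi j w Hlin Hj Hw) Ha)
    in Hchar.
  rewrite <- Hchar. Cring.
Qed.

End Amalgamation.

Theorem theorem5p3 (A B : BanachAlgebra) (th : A -> B) (I : B -> Prop)
  (Hth : contraction_hom A B th) (HI : closed_ideal B I)
  (Hcomm : amal_commutative th I)
  (HsA : sigma_nonempty A)
  (Hdense : span_dense_in_I th I) :
  forall (a : A) (i : B), I i ->
    (rad_amal th I (a, i) <-> (radA A a /\ radI B I i)).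
Proof.
  destruct Hth as [th_add [th_scal [th_mul _]]].
  destruct HI as [I_zero [I_add [I_scal [I_mull [I_mulr _]]]]].
  intros a i Hi. split.
  - intros H. split; [eapply rad_amal_radA | eapply rad_amal_radI]; eauto.
  - intros [Ha_rad Hi_rad]. eapply rad_pair_in_rad_amal; eauto.
Qed.
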